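(* Let $H$ be the Hilbert transform on $\mathbb{R}$ and $b(x)=\log|x|$. There exist constants $c_5,c_6>0$ such that for all $1<p<\infty$, \[ \|H\|_{L^p(\mathbb{R})\to L^{p,\infty}(\mathbb{R})}\ge c_5\,p,\qquad \|[b,H]\|_{L^p(\mathbb{R})\to L^{p,\infty}(\mathbb{R})}\ge c_6\max\{p',p^2\}. \]
   Context: $Hf(x)=\mathrm{p.v.}\int_{\mathbb{R}}\frac{f(y)}{x-y}\,dy$; $[b,H]f=bHf-H(bf)$; $p'=p/(p-1)$; $L^{p,\infty}$ has quasi-norm $\sup_{\lambda>0}\lambda|\{|g|>\lambda\}|^{1/p}$. *)

From HB Require Import structures.
From mathcomp Require Import all_boot all_order all_algebra.
From mathcomp Require Import all_classical all_reals all_analysis.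
Set Implicit Arguments. Unset Strict Implicit. Unset Printing Implicit Defensive.
Import Order.TTheory GRing.Theory Num.Theory.
Import numFieldNormedType.Exports.
Local Open Scope classical_set_scope.
Local Open Scope ring_scope.

Section Defs.
Variable R : realType.
Notation mu := (@lebesgue_measure R).

Definition trunc_hilbert (f : R -> R) (x eps : R) : R :=
  Rintegral mu [set y | eps < `|x - y|] (fun y => f y / (x - y)).

Definition hilbert (f : R -> R) (x : R) : R :=
  lim ((trunc_hilbert f x) @ 0^'+).

Definition logabs (x : R) : R := ln `|x|.

Definition commutator (b : R -> R) (T : (R -> R) -> R -> R) (f : R -> R) : R -> R :=
  fun x => b x * T f x - T (fun y => b y * f y) x.

Definition Lpnorm (p : R) (f : R -> R) : \bar R :=
  Lnorm mu p%:E (fun x => (f x)%:E).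

Definition superlevel (g : R -> R) (lam : R) : set R := [set x | lam < `|g x|].

Definition weakLpnorm (p : R) (g : R -> R) : \bar R :=
  ereal_sup [set (lam%:E * poweR (mu (superlevel g lam)) p^-1)%E
            | lam in [set lam : R | 0 < lam]].

Definition opnorm_Lp_weakLp (p : R) (T : (R -> R) -> R -> R) : \bar R :=
  ereal_sup [set weakLpnorm p (T f)
            | f in [set f : R -> R | measurable_fun setT f /\ (Lpnorm p f <= 1)%E]].

End Defs.

From HB Require Import structures.
From mathcomp Require Import all_boot all_order all_algebra.
From mathcomp Require Import all_classical all_reals all_analysis.
From mathcomp Require Import ring lra.
Import Order.TTheory GRing.Theory Num.Theory.
Import numFieldNormedType.Exports.
Local Open Scope ring_scope.
Local Open Scope classical_set_scope.

Set Implicit Arguments.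
Unset Strict Implicit.

(* Test on indicators f = 1_[m,1], and look at a window [a,b] disjoint from [m,1],
   where H f and [log|.|,H] f are ordinary integrals: a pointwise bound
   |T f| > lam on [a,b] gives ||T f||_{p,oo} >= lam (b-a)^(1/p) while ||f||_p <= 1.
   - With m = e^(-p/2) and x in [-e^(-p), -e^(-p)/2], H f(x) = -int_m^1 dy/(|x|+y)
     has size about -ln m = p/2, and the commutator, whose kernel
     (ln|x| - ln y)/(x - y) carries the extra factor ln(y/|x|) >= p/2, is of
     size about p^2; the window has length e^(-p)/2, and (e^(-p)/2)^(1/p) >= e^(-1)/2.
   - With m = 1/2, q = p' and x in [e^q, 2e^q], the commutator kernel is at least
     q/(2x) >= q/(4e^q) on [1/2,1], while the window contributes (e^q)^(1/p) = e^(q-1). *)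

Section Hilbert_lower_bounds.
Variable R : realType.
Notation mu := (@lebesgue_measure R).
Local Notation logH := (commutator (@logabs R) (@hilbert R)).

Lemma lebesgue_measure_le (A B : set R) : A `<=` B -> (mu A <= mu B)%E.
Proof.
by move=> AB; rewrite /lebesgue_measure /lebesgue_stieltjes_measure /measure_extension;
  exact: le_outer_measure.
Qed.

Lemma weakLpnorm_ge_itv (p lam a b : R) (g : R -> R) : 0 < p -> 0 < lam -> a <= b ->
  (forall x, a <= x <= b -> lam < `|g x|) ->
  ((lam * (b - a) `^ p^-1)%:E <= weakLpnorm p g)%E.
Proof.
move=> p0 lam0 ab glam.
apply: (@le_trans _ _ (lam%:E * poweR (mu (superlevel g lam)) p^-1)%E); last first.
  by apply: ereal_sup_ubound; exists lam.
rewrite EFinM lee_pmul2l ?lte_fin //.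
have -> : ((b - a) `^ p^-1)%:E = poweR ((b - a)%:E) p^-1 by [].
apply: gt0_ler_poweR.
- by rewrite invr_ge0 ltW.
- by rewrite in_itv /= lee_fin subr_ge0 ab leey.
- by rewrite in_itv /= measure_ge0 leey.
have -> : (b - a)%:E = mu `[a, b].
  by rewrite lebesgue_measure_itv /= lte_fin; case: ltgtP ab => //= ->; rewrite subrr.
by apply: lebesgue_measure_le => x /=; rewrite in_itv /= => /glam.
Qed.

Lemma opnorm_Lp_weakLp_ge (p : R) (T : (R -> R) -> R -> R) (f : R -> R) :
  measurable_fun setT f -> (Lpnorm p f <= 1)%E ->
  (weakLpnorm p (T f) <= opnorm_Lp_weakLp p T)%E.
Proof. by move=> mf nf; apply: ereal_sup_ubound; exists f. Qed.

Lemma hilbert_outside_support (f : R -> R) (a c x : R) :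
  (forall y, ~ (a <= y <= c) -> f y = 0) -> x < a \/ c < x ->
  hilbert f x = \int[mu]_(y in `[a, c]) (f y / (x - y)).
Proof.
move=> f0 xac.
(* [d] is the distance from [x] to [a, c]: truncation at [eps < d] cuts nothing. *)
pose d := if x < a then a - x else x - c.
have d0 : 0 < d.
  rewrite /d; case: ifPn => xa; first by rewrite subr_gt0.
  by case: xac => h; [rewrite h in xa | rewrite subr_gt0].
rewrite /hilbert; apply: norm_lim_near_cst; near=> eps.
rewrite /trunc_hilbert Rintegral_mkcond [RHS]Rintegral_mkcond.
apply: eq_Rintegral => y _; rewrite !patchE.
have [yac|yac] := boolP (y \in `[a, c]); last first.
  rewrite f0 ?mul0r; first by case: ifP.
  by move=> h; move/negP: yac; apply; rewrite inE /= in_itv /= h.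
suff -> : y \in [set y | eps < `|x - y|] by [].
have epsd : eps < d by near: eps; apply: nbhs_right_lt.
rewrite inE /=; apply: (lt_le_trans epsd).
move: yac; rewrite inE /= in_itv /= => /andP[ay yc].
rewrite /d; case: ifPn => xa.
  by rewrite ltr0_norm ?subr_lt0 ?(lt_le_trans xa) // opprB lerD2r.
case: xac => [h|cx]; first by rewrite h in xa.
by rewrite gtr0_norm ?subr_gt0 ?(le_lt_trans yc) // lerD2l lerN2.
Unshelve. all: by end_near.
Qed.

Lemma continuous_itv_integrable (a b : R) (g : R -> R) :
  (forall y, a <= y <= b -> continuous_at y g) ->
  mu.-integrable `[a, b] (EFin \o g).
Proof.
move=> gC; apply: continuous_compact_integrable; first exact: segment_compact.
by apply: continuous_in_subspaceT => y; rewrite inE /= in_itv /= => /gC.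
Qed.

Lemma continuous_invrB (x y : R) : y != x -> continuous_at y (fun y : R => (x - y)^-1).
Proof.
move=> yx; apply: (@continuousV _ _ (fun y => x - y)); first by rewrite subr_eq0 eq_sym.
by apply: cvgB; [exact: cvg_cst | exact: cvg_id].
Qed.

Lemma scaled_inv_itv_integrable (m k : R) : 0 < m ->
  mu.-integrable `[m, 1] (EFin \o (fun y : R => k * y^-1)).
Proof.
move=> m0; apply: continuous_itv_integrable => y /andP[my _].
apply: (@continuousM _ _ (fun=> k) (fun y : R => y^-1)); first exact: cvg_cst.
by apply: inv_continuous; rewrite gt_eqF // (lt_le_trans m0).
Qed.

Lemma Rintegral_itv_scaled_inv (m k : R) : 0 < m < 1 ->
  \int[mu]_(y in `[m, 1]) (k * y^-1) = k * - ln m.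
Proof.
move=> /andP[m0 m1].
have invC y : m <= y <= 1 -> continuous_at y (fun y : R => y^-1).
  by case/andP=> my _; apply: inv_continuous; rewrite gt_eqF // (lt_le_trans m0).
rewrite RintegralZl //; last exact: continuous_itv_integrable.
congr (_ * _); rewrite /Rintegral (@continuous_FTC2 _ _ (@ln R)) //=.
- by rewrite ln1 sub0r.
- by apply: continuous_in_subspaceT => y; rewrite inE /= in_itv /= => /invC.
- split.
  + move=> y; rewrite in_itv /= => /andP[my _].
    by have [] := is_derive1_ln (lt_trans m0 my).
  + by apply: cvg_at_right_filter; apply: continuous_ln.
  + by apply: cvg_at_left_filter; apply: continuous_ln.
- move=> y; rewrite in_itv /= => /andP[my _].
  by rewrite derive1E; have [_ ->] := is_derive1_ln (lt_trans m0 my).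
Qed.

Definition itv_indic (m : R) : R -> R := \1_(`[m, 1] : set R).

Lemma itv_indic_out (m y : R) : ~ (m <= y <= 1) -> itv_indic m y = 0.
Proof.
move=> ymN; rewrite /itv_indic indicE.
by case: (boolP (y \in _)) => // /[!(inE, in_itv)] /= /ymN.
Qed.

Lemma itv_indic_in (m y : R) : m <= y <= 1 -> itv_indic m y = 1.
Proof. by move=> ym; rewrite /itv_indic indicE mem_set //= in_itv. Qed.

Lemma measurable_itv_indic (m : R) : measurable_fun setT (itv_indic m).
Proof. by apply: measurable_realfun.measurable_indic; exact: measurable_itv. Qed.

Lemma Lpnorm_itv_indic_le1 (p m : R) : 0 < p -> 0 <= m <= 1 ->
  (Lpnorm p (itv_indic m) <= 1)%E.
Proof.
move=> p0 /andP[m0 m1]; rewrite /Lpnorm unlock /=.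
have -> : (\int[mu]_x (`|(itv_indic m x)%:E| `^ p))%E
          = (\int[mu]_x (\1_(`[m, 1] : set R) x)%:E)%E.
  apply: eq_integral => y _; rewrite /itv_indic indicE; case: (y \in _) => /=.
    by rewrite normr1 powR1.
  by rewrite normr0 powR0 // gt_eqF.
rewrite integral_indic //= setIT lebesgue_measure_itv /= lte_fin.
case: ifP => _; last by rewrite /poweR /= powR0 ?lee_fin // invr_neq0 // gt_eqF.
rewrite -EFinD /= lee_fin.
apply: (@le_trans _ _ (1 `^ p^-1)); last by rewrite powR1.
by apply: ge0_ler_powR; rewrite ?invr_ge0 ?nnegrE //; lra.
Qed.

Lemma hilbert_itv_indic (m x : R) : x < m \/ 1 < x ->
  hilbert (itv_indic m) x = \int[mu]_(y in `[m, 1]) (x - y)^-1.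
Proof.
move=> xm; rewrite (@hilbert_outside_support _ m 1) //; last exact: itv_indic_out.
by apply: eq_Rintegral => y; rewrite inE /= in_itv /= => ym; rewrite itv_indic_in // mul1r.
Qed.

Lemma commutator_itv_indic (m x : R) : 0 < m -> x < m \/ 1 < x ->
  logH (itv_indic m) x = \int[mu]_(y in `[m, 1]) ((logabs x - ln y) * (x - y)^-1).
Proof.
move=> m0 xm.
have yx y : m <= y <= 1 -> y != x.
  case/andP=> my y1; case: xm => h; first by rewrite gt_eqF // (lt_le_trans h).
  by rewrite lt_eqF // (le_lt_trans y1).
have ypos y : m <= y <= 1 -> 0 < y by case/andP=> my _; exact: lt_le_trans my.
have H_logf : hilbert (fun y => logabs y * itv_indic m y) x
              = \int[mu]_(y in `[m, 1]) (ln y * (x - y)^-1).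
  rewrite (@hilbert_outside_support _ m 1) //; last first.
    by move=> y h; rewrite itv_indic_out // mulr0.
  apply: eq_Rintegral => y; rewrite inE /= in_itv /= => ym.
  by rewrite itv_indic_in // mulr1 /logabs gtr0_norm // ypos.
rewrite /commutator hilbert_itv_indic // H_logf.
under [RHS]eq_Rintegral do rewrite mulrBl.
rewrite RintegralB ?RintegralZl //; apply: continuous_itv_integrable => y ym.
- exact: continuous_invrB (yx _ ym).
- apply: (@continuousM _ _ (fun=> logabs x) (fun y => (x - y)^-1)); first exact: cvg_cst.
  exact: continuous_invrB (yx _ ym).
- by apply: continuousM; [exact: continuous_ln (ypos _ ym) | exact: continuous_invrB (yx _ ym)].
Qed.

Lemma hilbert_itv_indic_ge (u t : R) : 0 < u -> 0 < t <= expR (- u) ->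
  u / 4 <= `| hilbert (itv_indic (expR (- u / 2))) (- t) |.
Proof.
move=> u0 /andP[t0 tu]; set m := expR (- u / 2).
have m0 : 0 < m by rewrite expR_gt0.
have m1 : m < 1 by rewrite expR_lt1; lra.
have tm : t <= m by apply: (le_trans tu); rewrite ler_expR; lra.
rewrite hilbert_itv_indic; last by left; lra.
have : \int[mu]_(y in `[m, 1]) (- t - y)^-1 <= \int[mu]_(y in `[m, 1]) (- 2^-1 * y^-1).
  apply: le_Rintegral => //; last first.
    move=> y; rewrite /= in_itv /= => /andP[my _].
    rewrite -opprD invrN mulNr lerN2 -invfM lef_pV2 ?posrE; lra.
  - exact: scaled_inv_itv_integrable.
  - by apply: continuous_itv_integrable => y ym; apply: continuous_invrB; rewrite gt_eqF //; lra.
rewrite Rintegral_itv_scaled_inv ?m0 // /m expRK => HI.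
by rewrite ler_normr; apply/orP; right; lra.
Qed.

Lemma commutator_itv_indic_ge (u t : R) : 0 < u -> 0 < t <= expR (- u) ->
  u * u / 8 <= `| logH (itv_indic (expR (- u / 2))) (- t) |.
Proof.
move=> u0 /andP[t0 tu]; set m := expR (- u / 2).
have m0 : 0 < m by rewrite expR_gt0.
have m1 : m < 1 by rewrite expR_lt1; lra.
have tm : t <= m by apply: (le_trans tu); rewrite ler_expR; lra.
have lnm : ln m = - u / 2 by rewrite /m expRK.
have lnt : ln t <= - u by rewrite -(expRK (- u)) ler_ln ?posrE ?expR_gt0.
rewrite commutator_itv_indic //; last by left; lra.
have : \int[mu]_(y in `[m, 1]) (u / 4 * y^-1)
       <= \int[mu]_(y in `[m, 1]) ((logabs (- t) - ln y) * (- t - y)^-1).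
  apply: le_Rintegral => //; last first.
    move=> y; rewrite /= in_itv /= => /andP[my y1].
    have y0 : 0 < y by exact: lt_le_trans my.
    have lny : - u / 2 <= ln y by rewrite -lnm ler_ln ?posrE.
    rewrite /logabs normrN gtr0_norm // -opprD invrN mulrN -mulNr opprB.
    have -> : u / 4 * y^-1 = u / 2 * (2 * y)^-1 by rewrite invfM; field; rewrite gt_eqF.
    by apply: ler_pM; rewrite ?invr_ge0 ?lef_pV2 ?posrE; lra.
  - apply: continuous_itv_integrable => y /andP[my _].
    apply: (@continuousM _ _ (fun y : R => logabs (- t) - ln y) (fun y : R => (- t - y)^-1)).
      by apply: cvgB; [exact: cvg_cst | apply: continuous_ln; rewrite (lt_le_trans m0)].
    by apply: continuous_invrB; rewrite gt_eqF //; lra.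
  - exact: scaled_inv_itv_integrable.
rewrite Rintegral_itv_scaled_inv ?m0 // lnm => HI.
by rewrite ler_normr; apply/orP; left; lra.
Qed.

Lemma commutator_half_indic_ge (q x : R) : 0 < q -> expR q <= x <= 2 * expR q ->
  q / (4 * expR q) <= `| logH (itv_indic 2^-1) x |.
Proof.
move=> q0; set A := expR q => /andP[Ax xA].
have A1 : 1 < A by rewrite /A -expR0 ltr_expR.
have lnx : q <= ln x by rewrite -(expRK q) ler_ln ?posrE ?expR_gt0 //; lra.
rewrite commutator_itv_indic //; last by right; lra.
have : \int[mu]_(y in `[2^-1, 1]) (q / (2 * A))
       <= \int[mu]_(y in `[2^-1, 1]) ((logabs x - ln y) * (x - y)^-1).
  apply: le_Rintegral => //; last first.
    move=> y; rewrite /= in_itv /= => /andP[my y1].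
    have lny : ln y <= 0 by exact: ln_le0.
    rewrite /logabs gtr0_norm; last lra.
    by apply: ler_pM; rewrite ?invr_ge0 ?lef_pV2 ?posrE; lra.
  - apply: continuous_itv_integrable => y /andP[my y1].
    apply: (@continuousM _ _ (fun y : R => logabs x - ln y) (fun y : R => (x - y)^-1)).
      by apply: cvgB; [exact: cvg_cst | apply: continuous_ln; lra].
    by apply: continuous_invrB; rewrite lt_eqF //; lra.
  - by apply: continuous_itv_integrable => y _; exact: cvg_cst.
rewrite Rintegral_cst //.
have -> : fine (mu `[2^-1, 1]) = 1 - 2^-1.
  by rewrite lebesgue_measure_itv /= lte_fin ifT //; lra.
move=> HI; rewrite ler_normr; apply/orP; left; apply: le_trans HI.
by rewrite le_eqVlt; apply/orP; left; apply/eqP; field; rewrite gt_eqF //; lra.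
Qed.

Lemma powR_expN_half_ge (p : R) : 1 < p -> expR (-1) / 2 <= (expR (- p) / 2) `^ p^-1.
Proof.
move=> p1.
have a0 : 0 < expR (- p) / 2 by rewrite divr_gt0 ?expR_gt0.
have -> : expR (-1) / 2 = expR (- 1 - ln 2) :> R by rewrite expRD expRN lnK ?posrE.
rewrite -[X in _ <= X]lnK; last by rewrite posrE powR_gt0.
rewrite ln_powR ln_div ?posrE ?expR_gt0 // expRK ler_expR.
have L0 : 0 <= ln (2 : R) by rewrite ln_ge0 //; lra.
have w0 : 0 < p^-1 by rewrite invr_gt0; lra.
have wp : p^-1 * p = 1 by rewrite mulVf // gt_eqF //; lra.
have w1 : p^-1 <= 1 by rewrite invf_le1; lra.
set w := p^-1 in w0 wp w1 *; set L := ln 2 in L0 *.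
nra.
Qed.

Lemma opnorm_ge_itv_indic (p m lam a b : R) (T : (R -> R) -> R -> R) :
  0 < p -> 0 <= m <= 1 -> 0 < lam -> a <= b ->
  (forall x, a <= x <= b -> lam < `|T (itv_indic m) x|) ->
  ((lam * (b - a) `^ p^-1)%:E <= opnorm_Lp_weakLp p T)%E.
Proof.
move=> p0 m01 lam0 ab Tlam.
apply: (@le_trans _ _ (weakLpnorm p (T (itv_indic m)))); first exact: weakLpnorm_ge_itv.
exact: opnorm_Lp_weakLp_ge (measurable_itv_indic m) (Lpnorm_itv_indic_le1 p0 m01).
Qed.

Lemma opnorm_ge_near0 (p lam : R) (T : (R -> R) -> R -> R) : 1 < p -> 0 < lam ->
  (forall t, 0 < t <= expR (- p) -> lam < `|T (itv_indic (expR (- p / 2))) (- t)|) ->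
  ((lam * (expR (-1) / 2))%:E <= opnorm_Lp_weakLp p T)%E.
Proof.
move=> p1 lam0 Tlam; have ep0 : 0 < expR (- p) by rewrite expR_gt0.
apply: le_trans
  (@opnorm_ge_itv_indic p (expR (- p / 2)) lam (- expR (- p)) (- (expR (- p) / 2)) T _ _ _ _ _).
- have -> : - (expR (- p) / 2) - - expR (- p) = expR (- p) / 2 by field.
  by rewrite lee_fin ler_pM2l //; exact: powR_expN_half_ge.
- lra.
- by rewrite expR_ge0 expR_le1; lra.
- exact: lam0.
- lra.
- move=> x x_win; rewrite -[x]opprK; apply: Tlam; lra.
Qed.

Lemma hilbert_opnorm_ge (p : R) : 1 < p ->
  ((expR (-1) / 16 * p)%:E <= opnorm_Lp_weakLp p (@hilbert R))%E.
Proof.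
move=> p1; have -> : expR (-1) / 16 * p = p / 8 * (expR (-1) / 2) by field.
apply: opnorm_ge_near0 => // [|t tp]; first lra.
by apply: lt_le_trans (hilbert_itv_indic_ge _ tp); lra.
Qed.

Lemma commutator_opnorm_ge_sqr (p : R) : 1 < p ->
  ((expR (-1) / 32 * p ^+ 2)%:E <= opnorm_Lp_weakLp p logH)%E.
Proof.
move=> p1; have -> : expR (-1) / 32 * p ^+ 2 = p * p / 16 * (expR (-1) / 2).
  by rewrite expr2; field.
have pp0 : 0 < p * p by nra.
apply: opnorm_ge_near0 => // [|t tp]; first lra.
by apply: lt_le_trans (commutator_itv_indic_ge _ tp); lra.
Qed.

Lemma commutator_opnorm_ge_conj (p : R) : 1 < p ->
  ((expR (-1) / 8 * (p / (p - 1)))%:E <= opnorm_Lp_weakLp p logH)%E.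
Proof.
move=> p1; set q := p / (p - 1); set A := expR q.
have q0 : 0 < q by rewrite /q divr_gt0 //; lra.
have A0 : 0 < A by rewrite expR_gt0.
(* The window [A, 2A] has length A and A^(1/p) = e^(q/p) = e^(q-1) since q/p = q - 1. *)
have window : q / (8 * A) * (2 * A - A) `^ p^-1 = expR (-1) / 8 * q.
  have -> : (2 * A - A) `^ p^-1 = expR (q / p).
    rewrite (_ : 2 * A - A = A); last by ring.
    by rewrite -[LHS]lnK ?posrE ?powR_gt0 // ln_powR /A expRK mulrC.
  have -> : q / (8 * A) * expR (q / p) = q / 8 * expR (q / p - q).
    by rewrite expRD expRN /A; field; rewrite gt_eqF ?expR_gt0.
  have -> : q / p - q = - 1.
    by rewrite /q; field; apply/andP; split; rewrite gt_eqF //; lra.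
  by ring.
rewrite -window; apply: (@opnorm_ge_itv_indic p 2^-1 (q / (8 * A)) A (2 * A)).
- lra.
- by apply/andP; split; lra.
- by rewrite divr_gt0 //; lra.
- lra.
- move=> x xA; apply: lt_le_trans (commutator_half_indic_ge q0 xA).
  by rewrite ltr_pM2l // -/A ltf_pV2 ?posrE; lra.
Qed.

End Hilbert_lower_bounds.

Theorem lemma1p2 (R : realType) :
  exists c5 c6 : R, 0 < c5 /\ 0 < c6 /\
    forall p : R, 1 < p ->
      ((c5 * p)%:E <= opnorm_Lp_weakLp p (@hilbert R))%E /\
      ((c6 * Num.max (p / (p - 1)) (p ^+ 2))%:E
         <= opnorm_Lp_weakLp p (commutator (@logabs R) (@hilbert R)))%E.
Proof.
have e0 : 0 < expR (-1) :> R by rewrite expR_gt0.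
exists (expR (-1) / 16), (expR (-1) / 32); split; first lra; split; first lra.
move=> p p1; split; first exact: hilbert_opnorm_ge.
have q0 : 0 < p / (p - 1) by rewrite divr_gt0 //; lra.
have [_|_] := leP (p / (p - 1)) (p ^+ 2); first exact: commutator_opnorm_ge_sqr.
apply: le_trans (commutator_opnorm_ge_conj p1); rewrite lee_fin.
by apply: ler_pM; lra.
Qed.
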